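(* For every $n\ge 6$ there exist two non-isomorphic graphs $G,H$ on $n$ vertices and a set $\mathcal{F}$ consisting of a single graph of constant order such that, for every number of rounds, $1$-WL does not distinguish $G$ and $H$, while $1$-WL$_{\mathcal{F}}$ distinguishes $G$ and $H$ after a single round.
   Context: Graphs are finite, simple, undirected and unlabeled. $\mathsf{RELABEL}$ is a fixed injective map, shared by all graphs, from pairs (colour, finite multiset of colours) to natural numbers. $1$-WL: $C^1_0$ is constant; $C^1_t(v)=\mathsf{RELABEL}(C^1_{t-1}(v),\{\!\{C^1_{t-1}(u):u\in N(v)\}\!\})$. $1$-WL$_{\mathcal{F}}$: same update, but initial colour $C^{1,\mathcal{F}}_0(v)=(\ell_F(v))_{F\in\mathcal{F}}$ where $\ell_F(v)=1$ if $v$ lies in some vertex set $X$ whose induced subgraph $G[X]$ is isomorphic to $F$ and $0$ otherwise. An algorithm distinguishes $G$ and $H$ after round $t$ if for some round $s\le t$ there is a colour $c$ such that the number of vertices of colour $c$ at round $s$ differs between $G$ and $H$ (colourings computed with the shared $\mathsf{RELABEL}$). *)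

From mathcomp Require Import all_boot all_fingroup.
Set Implicit Arguments. Unset Strict Implicit. Unset Printing Implicit Defensive.

Definition simple_graph n (e : rel 'I_n) : Prop := symmetric e /\ irreflexive e.

Definition graph_iso n (e1 e2 : rel 'I_n) : Prop :=
  exists f : {perm 'I_n}, forall x y, e1 x y = e2 (f x) (f y).

(* RELABEL: injective map from pairs (colour, finite multiset of colours) to nat.
   A multiset is represented by a sequence, taken up to permutation. *)
Definition relabel_injective (RELABEL : nat -> seq nat -> nat) : Prop :=
  forall c s c' s', RELABEL c s = RELABEL c' s' <-> (c = c' /\ perm_eq s s').

Fixpoint wl_col (RELABEL : nat -> seq nat -> nat) n (e : rel 'I_n) (c0 : 'I_n -> nat)
    (t : nat) (v : 'I_n) : nat :=
  match t with
  | 0 => c0 v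
  | t'.+1 => RELABEL (wl_col RELABEL e c0 t' v)
                     [seq wl_col RELABEL e c0 t' u | u <- enum 'I_n & e v u]
  end.

(* l_F(v) = 1 iff v lies in a vertex set X with G[X] isomorphic to F, i.e. there is
   an injective map g : V(F) -> V(G) preserving adjacency and non-adjacency whose
   image contains v. *)
Definition in_induced_copy k (eF : rel 'I_k) n (e : rel 'I_n) (v : 'I_n) : bool :=
  [exists g : {ffun 'I_k -> 'I_n},
     [&& injectiveb g, [forall i, forall j, eF i j == e (g i) (g j)] & v \in codom g]].

Definition wl1 RELABEL n (e : rel 'I_n) := wl_col RELABEL e (fun _ => 0).

Definition wl1F RELABEL k (eF : rel 'I_k) n (e : rel 'I_n) :=
  wl_col RELABEL e (fun v => nat_of_bool (in_induced_copy eF e v)).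

Definition col_count n (col : 'I_n -> nat) (c : nat) : nat := #|[pred v | col v == c]|.

Definition distinguishes_after n (colG colH : nat -> 'I_n -> nat) (t : nat) : Prop :=
  exists s, s <= t /\ exists c, col_count (colG s) c <> col_count (colH s) c.

From mathcomp Require Import all_boot all_fingroup.
From mathcomp Require Import zify.

(* Take G = C_n and H = C_3 + C_(n-3).  Both are 2-regular, so colour refinement
   from a constant colouring never splits a colour class and 1-WL sees the same
   colour counts on G and H in every round.  But H contains a triangle and G does
   not (n >= 4), so already the initial colouring of 1-WL_F with F = K_3 marks
   vertices of H and none of G. *)

Definition regular {n} (e : rel 'I_n) (d : nat) : Prop := forall v, #|e v| = d.

Definition triangle_free {T : Type} (e : rel T) : Prop :=
  forall x y z, e x y -> e y z -> e x z -> False.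

Definition complete_graph k : rel 'I_k := fun i j => i != j.

Lemma graph_iso_triangle_free {n} {e1 e2 : rel 'I_n} :
  graph_iso e1 e2 -> triangle_free e1 -> triangle_free e2.
Proof.
move=> [f fE] e1_free x y z xy yz xz.
by apply: (e1_free (f^-1 x)%g (f^-1 y)%g (f^-1 z)%g); rewrite fE !permKV.
Qed.

Lemma triangle_free_notin_K3_copy n (e : rel 'I_n) v :
  triangle_free e -> in_induced_copy (complete_graph 3) e v = false.
Proof.
move=> e_free; apply/negbTE/existsP => -[g /and3P[_ /forallP gE _]].
have edge i j : i != j -> e (g i) (g j) by move=> ij; move/forallP/(_ j)/eqP: (gE i) <-.
by apply: (e_free (g ord0) (g (inord 1)) (g (inord 2))); apply: edge;
  rewrite -val_eqE /= ?inordK.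
Qed.

Lemma triangle_in_K3_copy {n} {e : rel 'I_n} {x y z} :
  simple_graph e -> e x y -> e y z -> e x z -> in_induced_copy (complete_graph 3) e x.
Proof.
move=> [e_sym e_irr] xy yz xz.
have neq u w : e u w -> u != w by apply: contraTneq => ->; rewrite e_irr.
pose g := [ffun i : 'I_3 => nth x [:: x; y; z] i].
apply/existsP; exists g; apply/and3P; split.
- apply/injectiveP => i j; rewrite !ffunE.
  case: i j => -[|[|[|?]]] ? [[|[|[|?]]] ?] //= eq_ij; apply: val_inj => //=;
  by move: (neq _ _ xy) (neq _ _ yz) (neq _ _ xz); rewrite eq_ij ?eqxx // eq_sym eq_ij eqxx.
- apply/forallP => -[[|[|[|?]]] ?]; apply/forallP => -[[|[|[|?]]] ?] //;
  by rewrite !ffunE /complete_graph -val_eqE /= ?e_irr // e_sym.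
- by apply/codomP; exists ord0; rewrite ffunE.
Qed.

Lemma complete_graph_simple k : simple_graph (complete_graph k).
Proof. by split=> [i j | i]; rewrite /complete_graph ?eqxx // eq_sym. Qed.

Lemma size_nbhd n (e : rel 'I_n) v : size [seq u <- enum 'I_n | e v u] = #|e v|.
Proof. by rewrite enumT cardE /enum_mem. Qed.

Lemma map_const_nseq {T1 T2 : Type} {c : T2} {f : T1 -> T2} (s : seq T1) :
  (forall x, f x = c) -> map f s = nseq (size s) c.
Proof. by move=> fc; elim: s => //= x s ->; rewrite fc. Qed.

Section ColourRefinement.

Variable RELABEL : nat -> seq nat -> nat.

Fixpoint regular_colour (d t : nat) : nat :=
  if t is t'.+1 then RELABEL (regular_colour d t') (nseq d (regular_colour d t')) else 0.

Lemma wl1_regular {n} {e : rel 'I_n} {d} :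
  regular e d -> forall t v, wl1 RELABEL e t v = regular_colour d t.
Proof.
rewrite /wl1 => e_reg; elim=> [|t IH] v //=.
by rewrite IH (map_const_nseq _ IH) size_nbhd e_reg.
Qed.

Lemma wl1_regular_indistinguishable n (eG eH : rel 'I_n) d t :
  regular eG d -> regular eH d ->
  ~ distinguishes_after (wl1 RELABEL eG) (wl1 RELABEL eH) t.
Proof.
move=> G_reg H_reg [s [_ [c]]]; apply; apply: eq_card => v.
by rewrite !inE (wl1_regular G_reg) (wl1_regular H_reg).
Qed.

Lemma wl1F_K3_distinguishes n (eG eH : rel 'I_n) x y z t :
  triangle_free eG -> simple_graph eH -> eH x y -> eH y z -> eH x z ->
  distinguishes_after (wl1F RELABEL (complete_graph 3) eG)
                      (wl1F RELABEL (complete_graph 3) eH) t.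
Proof.
move=> G_free H_simple xy yz xz; exists 0; split=> //; exists 1.
rewrite /col_count /wl1F /=.
have -> : #|[pred v | nat_of_bool (in_induced_copy (complete_graph 3) eG v) == 1]| = 0.
  by apply: eq_card0 => v; rewrite inE /= triangle_free_notin_K3_copy.
suff: 0 < #|[pred v | nat_of_bool (in_induced_copy (complete_graph 3) eH v) == 1]|.
  by case: #|_|.
by apply/card_gt0P; exists x; rewrite inE /= (triangle_in_K3_copy H_simple xy yz xz).
Qed.

End ColourRefinement.

Definition cycle_rel (a b : nat) : rel nat := fun x y =>
  [&& a <= x < b, a <= y < b &
   [|| y == x.+1, x == y.+1, (x == a) && (y == b.-1) | (y == a) && (x == b.-1)]].

Definition cycle_graph n : rel 'I_n := fun x y => cycle_rel 0 n x y.

Definition triangle_cycle_graph n : rel 'I_n :=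
  fun x y => cycle_rel 0 3 x y || cycle_rel 3 n x y.

Lemma card_cycle_rel_nbhd n a b (x : nat) :
  3 <= b - a -> b <= n -> a <= x < b -> #|[pred u : 'I_n | cycle_rel a b x u]| = 2.
Proof.
move=> len3 bn xab.
set succ := if x.+1 < b then x.+1 else a.
set pred := if x == a then b.-1 else x.-1.
have succ_n : succ < n by rewrite /succ; case: ifP; lia.
have pred_n : pred < n by rewrite /pred; case: ifP; lia.
have -> : #|[pred u : 'I_n | cycle_rel a b x u]|
          = #|pred2 (Ordinal succ_n) (Ordinal pred_n)|.
  apply: eq_card => u; rewrite !inE -!val_eqE /= /cycle_rel /succ /pred.
  by case: ifP; case: ifP; lia.
by rewrite card2 -val_eqE /= /succ /pred; case: ifP; case: ifP; lia.
Qed.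

Lemma cycle_graph_regular {n} : 3 <= n -> regular (cycle_graph n) 2.
Proof. by move=> n3 v; apply: card_cycle_rel_nbhd; rewrite ?subn0 ?ltn_ord. Qed.

Lemma triangle_cycle_graph_regular {n} : 6 <= n -> regular (triangle_cycle_graph n) 2.
Proof.
move=> n6 v; have vn := ltn_ord v.
have [v3 | v3] := ltnP v 3.
  rewrite -(@card_cycle_rel_nbhd n 0 3 v) ?v3 //; last lia.
  by apply: eq_card => u; rewrite !inE /triangle_cycle_graph /cycle_rel /=; lia.
rewrite -(@card_cycle_rel_nbhd n 3 n v); try lia.
by apply: eq_card => u; rewrite !inE /triangle_cycle_graph /cycle_rel /=; lia.
Qed.

Lemma cycle_graph_simple {n} : 3 <= n -> simple_graph (cycle_graph n).
Proof. by move=> n3; split=> [x y | x]; rewrite /cycle_graph /cycle_rel; lia. Qed.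

Lemma triangle_cycle_graph_simple {n} : 6 <= n -> simple_graph (triangle_cycle_graph n).
Proof. by move=> n6; split=> [x y | x]; rewrite /triangle_cycle_graph /cycle_rel; lia. Qed.

Lemma cycle_graph_triangle_free {n} : 4 <= n -> triangle_free (cycle_graph n).
Proof. by move=> n4 x y z; rewrite /cycle_graph /cycle_rel; lia. Qed.

Lemma triangle_cycle_graph_triangle {n} : 3 <= n ->
  exists x y z, [/\ triangle_cycle_graph n x y, triangle_cycle_graph n y z
                  & triangle_cycle_graph n x z].
Proof.
move=> n3; have n1 : 1 < n by lia.
exists (Ordinal (ltnW n1)), (Ordinal n1), (Ordinal n3).
by rewrite /triangle_cycle_graph /cycle_rel.
Qed.

Theorem proposition2 :
  forall RELABEL : nat -> seq nat -> nat, relabel_injective RELABEL ->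
  exists k : nat, forall n : nat, 6 <= n ->
    exists (eG eH : rel 'I_n) (eF : rel 'I_k),
      [/\ simple_graph eG /\ simple_graph eH /\ simple_graph eF,
          ~ graph_iso eG eH,
          (forall t, ~ distinguishes_after (wl1 RELABEL eG) (wl1 RELABEL eH) t) &
          distinguishes_after (wl1F RELABEL eF eG) (wl1F RELABEL eF eH) 1].
Proof.
move=> RELABEL _; exists 3 => n n6.
have n3 : 3 <= n by lia.
have [x [y [z [xy yz xz]]]] := triangle_cycle_graph_triangle n3.
have G_free : triangle_free (cycle_graph n) by apply: cycle_graph_triangle_free; lia.
have H_simple := triangle_cycle_graph_simple n6.
exists (cycle_graph n), (triangle_cycle_graph n), (complete_graph 3); split.
- by split; [exact: cycle_graph_simple | split; [|exact: complete_graph_simple]].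
- by move=> iso; apply: (graph_iso_triangle_free iso G_free _ _ _ xy yz xz).
- move=> t; apply: wl1_regular_indistinguishable (cycle_graph_regular n3)
                                               (triangle_cycle_graph_regular n6).
- exact: wl1F_K3_distinguishes G_free H_simple xy yz xz.
Qed.
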